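(* Let $R$ be a ring such that the polynomial ring $R[t]$ in one indeterminate is Cohen-Macaulay. Then $R$ is Cohen-Macaulay.
   Context: All rings are commutative with identity. For $x\in R$ let $C(x)$ be the complex $0\to R\to R_x\to 0$ ($R$ in degree $0$, natural localization map); for a finite sequence $\mathbf x=x_1,\dots,x_\ell$ put $C(\mathbf x)=C(x_1)\otimes_R\cdots\otimes_R C(x_\ell)$ and let $H^i_{\mathbf x}(M)$ be the $i$th cohomology of $C(\mathbf x)\otimes_R M$; $\ell(\mathbf x)=\ell$. Let $K(x)$ be $0\to R\xrightarrow{x}R\to 0$ (degrees $1,0$), $K(\mathbf x)=K(x_1)\otimes\cdots\otimes K(x_\ell)$, $H_i(\mathbf x)$ its homology. For $m\ge n$ the chain map $K(\mathbf x^m)\to K(\mathbf x^n)$ ($\mathbf x^m=x_1^m,\dots,x_\ell^m$) is the tensor product of the maps $K(x_i^m)\to K(x_i^n)$ given by multiplication by $x_i^{m-n}$ in degree $1$ and identity in degree $0$. $\mathbf x$ is weakly proregular if for every $n$ there is $m\ge n$ with $H_i(\mathbf x^m)\to H_i(\mathbf x^n)$ zero for all $i\ge1$. $\mathbf x$ is a parameter sequence on $R$ if it is weakly proregular, $(\mathbf x)R\neq R$, and $H^{\ell(\mathbf x)}_{\mathbf x}(R)_p\neq0$ for every prime $p\supseteq(\mathbf x)R$ (the empty sequence is a parameter sequence). It is a strong parameter sequence if $x_1,\dots,x_i$ is a parameter sequence for each $i=1,\dots,\ell(\mathbf x)$. A regular sequence on $M$: each $x_i$ is a non-zero-divisor on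 $M/(x_1,\dots,x_{i-1})M$ and $M\neq(\mathbf x)M$. A ring $R$ is Cohen-Macaulay if every strong parameter sequence on $R$ is a regular sequence on $R$. *)

From mathcomp Require Import all_boot all_order all_algebra.
Set Implicit Arguments. Unset Strict Implicit. Unset Printing Implicit Defensive.
Import GRing.Theory.
Local Open Scope ring_scope.

Section Defs.
Variable R : comNzRingType.

Definition in_ideal (xs : seq R) (r : R) : Prop :=
  exists c : 'I_(size xs) -> R, r = \sum_(j < size xs) c j * xs`_j.

Definition prime_ideal (p : R -> Prop) : Prop :=
  [/\ p 0, (forall a b, p a -> p b -> p (a + b)),
      (forall a b, p b -> p (a * b)), ~ p 1 &
      (forall a b, p (a * b) -> p a \/ p b)].

(* K(y) = K(y_1) (x) ... (x) K(y_l) has basis e_S, S a subset of 'I_l, e_S in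
   degree #|S|.  A chain is a coefficient function c : {set 'I_l} -> R. The
   differential is d(e_S) = sum_{j in S} (-1)^#{k in S, k<j} y_j e_{S\{j}};
   the coefficient of (d c) at T is therefore computed below. *)
Definition koszul_d (l : nat) (y : 'I_l -> R) (c : {set 'I_l} -> R)
    (T : {set 'I_l}) : R :=
  \sum_(j < l | j \notin T)
     (-1) ^+ #|[set k in T | (k < j)%N]| * y j * c (j |: T).

Definition homog (l i : nat) (c : {set 'I_l} -> R) : Prop :=
  forall S : {set 'I_l}, #|S| <> i -> c S = 0.

(* the comparison chain map K(y^m) -> K(y^n), m >= n: on e_S it is
   multiplication by prod_{j in S} y_j^(m-n) (tensor product of the maps
   "multiplication by y_j^(m-n) in degree 1, identity in degree 0") *)
Definition koszul_cmp (l m n : nat) (y : 'I_l -> R) (c : {set 'I_l} -> R)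
    (S : {set 'I_l}) : R :=
  (\prod_(j in S) y j ^+ (m - n)) * c S.

(* the induced map H_i(y^m) -> H_i(y^n) is zero: every i-cycle of K(y^m)
   is sent to an i-boundary of K(y^n) *)
Definition koszul_map_zero (l : nat) (y : 'I_l -> R) (m n i : nat) : Prop :=
  forall c : {set 'I_l} -> R, homog i c ->
    (forall T, koszul_d (fun j => y j ^+ m) c T = 0) ->
    exists b : {set 'I_l} -> R, homog i.+1 b /\
      forall S, koszul_cmp m n y c S = koszul_d (fun j => y j ^+ n) b S.

Definition weakly_proregular (xs : seq R) : Prop :=
  forall n : nat, exists2 m : nat, (n <= m)%N &
    forall i : nat, (0 < i)%N ->
      koszul_map_zero (fun j : 'I_(size xs) => xs`_j) m n i.

(* C(x)^l = R_{x_1...x_l}; its elements are fractions r/f^k, f = prod x_j,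
   and r/f^k = s/f^e in R_f iff f^N (r f^e - s f^k) = 0 for some N.
   H^l_x(R) = C^l / im(d^{l-1}), where C^{l-1} = (+)_i R_{f_i},
   f_i = prod_{j<>i} x_j, and a/f_i^e maps to a x_i^e / f^e.
   (Sums of such terms can be brought to a common exponent e.)
   cech_top_zero xs r k  <=>  the class of r/f^k in H^l_x(R) is zero. *)
Definition cech_top_zero (xs : seq R) (r : R) (k : nat) : Prop :=
  let f := \prod_(x <- xs) x in
  exists (a : 'I_(size xs) -> R) (e N : nat),
    f ^+ N * (r * f ^+ e - (\sum_(i < size xs) a i * xs`_i ^+ e) * f ^+ k) = 0.

(* H^l_x(R)_p <> 0: some element z/s of the localization (z in H^l_x(R),
   s notin p) is nonzero, i.e. there is no u notin p with u*(1*z - s*0) = 0. *)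
Definition top_cech_loc_nonzero (xs : seq R) (p : R -> Prop) : Prop :=
  exists (r : R) (k : nat) (s : R), ~ p s /\
    ~ (exists u : R, ~ p u /\ cech_top_zero xs (u * r) k).

Definition parameter_seq (xs : seq R) : Prop :=
  [/\ weakly_proregular xs, ~ in_ideal xs 1 &
      forall p : R -> Prop, prime_ideal p ->
        (forall r, in_ideal xs r -> p r) -> top_cech_loc_nonzero xs p].

Definition strong_parameter_seq (xs : seq R) : Prop :=
  forall i : nat, (1 <= i <= size xs)%N -> parameter_seq (take i xs).

Definition regular_seq (xs : seq R) : Prop :=
  (forall i : nat, (i < size xs)%N -> forall r : R,
      in_ideal (take i xs) (xs`_i * r) -> in_ideal (take i xs) r)
  /\ ~ in_ideal xs 1.

Definition CohenMacaulay : Prop :=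
  forall xs : seq R, strong_parameter_seq xs -> regular_seq xs.

End Defs.

From mathcomp Require Import all_boot all_order all_algebra.
From Stdlib Require Import Classical ClassicalEpsilon.
Set Implicit Arguments.
Unset Strict Implicit.
Import GRing.Theory.
Local Open Scope ring_scope.

(* The constant embedding R -> R[t] behaves like a faithfully flat extension:
   a parameter sequence of R stays one in R[t], because Koszul boundaries,
   vanishing of Cech classes and membership in primes can all be tested one
   coefficient in t at a time.  Conversely, ideal membership descends from
   R[t] to R by reading off constant coefficients, so the regularity of the
   extended sequence in the Cohen-Macaulay ring R[t] gives regularity in R. *)

Section ConstantPolynomials.
Variable R : comNzRingType.
Implicit Types (xs : seq R) (r : R) (u : {poly R}).

Lemma nth_map_polyC xs j : (map polyC xs)`_j = (xs`_j)%:P.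
Proof.
have [lt_j_xs | le_xs_j] := ltnP j (size xs); first by rewrite (nth_map 0).
by rewrite !nth_default ?size_map.
Qed.

Lemma in_ideal_map_polyC xs r : in_ideal (map polyC xs) r%:P <-> in_ideal xs r.
Proof.
rewrite /in_ideal size_map; split=> [[c def_r] | [c ->]].
- exists (fun j => (c j)`_0); have := congr1 (coefp 0) def_r.
  rewrite /= coefC eqxx coef_sum => ->.
  by apply: eq_bigr => j _; rewrite nth_map_polyC coefMC.
- exists (fun j => (c j)%:P); rewrite rmorph_sum; apply: eq_bigr => j _.
  by rewrite nth_map_polyC rmorphM.
Qed.

Section Koszul.
Variables (l : nat) (y : 'I_l -> R) (Y : 'I_l -> {poly R}).
Hypothesis def_Y : forall j, Y j = (y j)%:P.

Lemma coef_koszul_d_polyC m (c : {set 'I_l} -> {poly R}) T k :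
  (koszul_d (fun j => Y j ^+ m) c T)`_k
    = koszul_d (fun j => y j ^+ m) (fun S => (c S)`_k) T.
Proof.
rewrite /koszul_d coef_sum; apply: eq_bigr => j _.
have signC a : (-1) ^+ a = ((-1) ^+ a)%:P :> {poly R}.
  by rewrite rmorphXn rmorphN1.
by rewrite def_Y signC -rmorphXn -rmorphM coefCM.
Qed.

Lemma coef_koszul_cmp_polyC m n (c : {set 'I_l} -> {poly R}) S k :
  (koszul_cmp m n Y c S)`_k = koszul_cmp m n y (fun S => (c S)`_k) S.
Proof.
rewrite /koszul_cmp (eq_bigr (fun j => (y j ^+ (m - n))%:P)); last first.
  by move=> j _; rewrite def_Y rmorphXn.
by rewrite -rmorph_prod coefCM.
Qed.

Lemma koszul_map_zero_polyC m n i :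
  koszul_map_zero y m n i -> koszul_map_zero Y m n i.
Proof.
move=> zero_y c c_homog c_cycle.
have coef_bound k : exists b, homog i.+1 b /\
    forall S, koszul_cmp m n y (fun S => (c S)`_k) S
              = koszul_d (fun j => y j ^+ n) b S.
  apply: zero_y => [S /c_homog -> | T]; first exact: coef0.
  by rewrite -coef_koszul_d_polyC c_cycle coef0.
have [b bP] := choice _ coef_bound.
pose D := (\max_(S : {set 'I_l}) size (c S))%N.
exists (fun S => \poly_(k < D) b k S); split=> [S S_size | S].
  apply/polyP => k; rewrite coef_poly coef0.
  by case: ifP => // _; apply: (proj1 (bP k)).
apply/polyP => k; rewrite coef_koszul_cmp_polyC coef_koszul_d_polyC.
under [RHS]eq_bigr do rewrite coef_poly.
have [lt_k_D | le_D_k] := ltnP k D; first by rewrite (proj2 (bP k)).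
rewrite big1 => [|j _]; last by rewrite mulr0.
rewrite /koszul_cmp nth_default ?mulr0 //.
exact: leq_trans (leq_bigmax (F := fun S => size (c S)) S) le_D_k.
Qed.

End Koszul.

Lemma weakly_proregular_map_polyC xs :
  weakly_proregular xs -> weakly_proregular (map polyC xs).
Proof.
move=> wpr_xs n; have [m le_n_m zero_xs] := wpr_xs n.
exists m => // i i_gt0; rewrite size_map.
apply: (@koszul_map_zero_polyC _ (fun j => xs`_j)).
  by move=> j; rewrite nth_map_polyC.
exact: zero_xs.
Qed.

Lemma cech_top_zero_coef xs u k j :
  cech_top_zero (map polyC xs) u k -> cech_top_zero xs u`_j k.
Proof.
rewrite /cech_top_zero size_map big_map -rmorph_prod.
case=> a [e [N zero_u]]; exists (fun i => (a i)`_j), e, N.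
have coef_sum_a : (\sum_(i < size xs) a i * (map polyC xs)`_i ^+ e)`_j
    = \sum_(i < size xs) (a i)`_j * xs`_i ^+ e.
  rewrite coef_sum; apply: eq_bigr => i _.
  by rewrite nth_map_polyC -rmorphXn coefMC.
have := congr1 (coefp j) zero_u.
by rewrite /= coef0 -!rmorphXn coefCM coefB !coefMC coef_sum_a.
Qed.

Lemma prime_ideal_polyC_preim (P : {poly R} -> Prop) :
  prime_ideal P -> prime_ideal (fun r => P r%:P).
Proof.
case=> P0 PD PM P1 Pprime; split.
- by rewrite polyC0.
- by move=> a b Pa Pb; rewrite polyCD; apply: PD.
- by move=> a b Pb; rewrite polyCM; apply: PM.
- by rewrite polyC1.
- by move=> a b; rewrite polyCM; apply: Pprime.
Qed.

Lemma prime_ideal_coef (P : {poly R} -> Prop) u :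
  prime_ideal P -> ~ P u -> exists j, ~ P (u`_j)%:P.
Proof.
case=> P0 PD PM _ _ notPu; apply: NNPP => all_coefs.
apply: notPu; rewrite -[u]coefK poly_def.
elim/big_ind: _ => // j _; rewrite -mul_polyC mulrC; apply: PM.
by apply: NNPP => notPj; apply: all_coefs; exists j.
Qed.

Lemma parameter_seq_map_polyC xs :
  parameter_seq xs -> parameter_seq (map polyC xs).
Proof.
case=> wpr_xs not_unit top_xs; split.
- exact: weakly_proregular_map_polyC.
- by rewrite -polyC1 in_ideal_map_polyC.
move=> P P_prime xs_sub_P.
have [r [k [s [_ top_nz]]]] := top_xs _ (prime_ideal_polyC_preim P_prime)
  (fun r xs_r => xs_sub_P _ (proj2 (in_ideal_map_polyC xs r) xs_r)).
exists r%:P, k, 1; split; first by case: P_prime.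
case=> u [notPu zero_ur]; have [j notPj] := prime_ideal_coef P_prime notPu.
apply: top_nz; exists u`_j; split=> //.
by rewrite -coefMC; apply: cech_top_zero_coef.
Qed.

Lemma strong_parameter_seq_map_polyC xs :
  strong_parameter_seq xs -> strong_parameter_seq (map polyC xs).
Proof.
move=> spar_xs i; rewrite size_map -map_take => i_range.
exact/parameter_seq_map_polyC/spar_xs.
Qed.

Lemma regular_seq_of_map_polyC xs :
  regular_seq (map polyC xs) -> regular_seq xs.
Proof.
rewrite /regular_seq size_map -polyC1 in_ideal_map_polyC.
case=> reg_xs not_unit; split=> // i lt_i_xs r.
have := reg_xs i lt_i_xs r%:P.
by rewrite -map_take nth_map_polyC -polyCM !in_ideal_map_polyC.
Qed.

End ConstantPolynomials.

Theorem corollary4p6 (R : comNzRingType) :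
  CohenMacaulay {poly R} -> CohenMacaulay R.
Proof.
move=> CM_poly xs /strong_parameter_seq_map_polyC /CM_poly.
exact: regular_seq_of_map_polyC.
Qed.
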